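(* In a strategic game in the setting described in the context (with equivalent priors), Assumption SAV precludes Assumption FIX; that is, SAV and FIX cannot both hold.
   Context: Setting: there are $n\ge 2$ players and a measurable space $(\Omega,\mathcal{F})$. Each player $i$ has a prior $p_i$ on $\mathcal{F}$, an action set $A_i\subseteq\mathbb{R}$ with $|A_i|>1$, and a finite private information partition $\mathcal{I}_i$ of $\Omega$ into nonempty measurable events. The priors are equivalent (same null sets); strategies are identified when they agree up to null events. A strategy of player $i$ is a $\sigma(\mathcal{I}_i)$-measurable function $s_i:\Omega\to A_i$, and player $i$ is free to apply any such function. For each strategy $s_i$, player $i$ has a unique conjecture $\Psi_i(s_i)$, an $(n-1)$-tuple of strategies of the other players. Assumption SAV (strategic certainty): for every player $i$ and every strategy $s_i$, $\Psi_i(s_i)=s^i$, where $s^i$ is the true tuple of strategies the other players apply in response to $s_i$ (so each strategy of player $i$ determines exactly one response of each other player, and player $i$'s conjecture is correct). Assumption FIX: for every player $i$, $\Psi_i(s_i')=\Psi_i(s_i'')$ for all strategies $s_i',s_i''$ of player $i$ (the other players keep their strategies when player $i$ changes his). *)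

From mathcomp Require Import all_boot all_order all_algebra.
From mathcomp Require Import all_classical all_reals all_analysis.
Set Implicit Arguments. Unset Strict Implicit. Unset Printing Implicit Defensive.
Import Order.TTheory GRing.Theory Num.Theory.
Local Open Scope classical_set_scope.
Local Open Scope ring_scope.

Section Game.
Context {d : measure_display} {Omega : measurableType d} {R : realType} {n : nat}.

Definition equivalent_priors (p : 'I_n -> probability Omega R) : Prop :=
  forall i j (E : set Omega), measurable E -> (p i E = 0%E <-> p j E = 0%E).

Definition finite_meas_partition (P : set (set Omega)) : Prop :=
  [/\ finite_set P,
      (forall E, P E -> measurable E /\ E !=set0),
      (forall E F, P E -> P F -> E `&` F !=set0 -> E = F)
    & (forall w, exists2 E, P E & E w)].

Definition gen_measurable (P : set (set Omega)) (f : Omega -> R) : Prop :=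
  forall B : set R, measurable B -> <<s P >> (f @^-1` B).

Definition is_strategy (A : set R) (P : set (set Omega)) (f : Omega -> R) : Prop :=
  (forall w, A (f w)) /\ gen_measurable P f.

(* Strategies are identified when they agree up to a null event
   (null for the priors; they are equivalent, so we require it for all). *)
Definition strat_eq (p : 'I_n -> probability Omega R) (f g : Omega -> R) : Prop :=
  forall k, (p k).-negligible [set w | f w <> g w].

End Game.

From mathcomp Require Import all_boot all_order all_algebra.
From mathcomp Require Import all_classical all_reals all_analysis.
Set Implicit Arguments. Unset Strict Implicit. Unset Printing Implicit Defensive.
Local Open Scope classical_set_scope.
Local Open Scope ring_scope.

(* Under SAV every player i conjectures exactly the responses his strategy
   provokes, and under FIX that conjecture does not depend on his strategy;
   together they force the others' responses to be the same whatever player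
   i does.  But by freedom another player j can apply two distinct constant
   strategies, each realized in some profile, and these cannot agree up to a
   null event since a probability does not vanish on the whole space. *)

Section StrategyEquivalence.
Context {d : measure_display} {Omega : measurableType d} {R : realType} {n : nat}.
Variable p : 'I_n -> probability Omega R.

Lemma strat_eq_refl (f : Omega -> R) : strat_eq p f f.
Proof. by move=> k; apply: (negligibleS _ (negligible_set0 _)) => w /=. Qed.

Lemma strat_eq_sym (f g : Omega -> R) : strat_eq p f g -> strat_eq p g f.
Proof. by move=> fg k; apply: (negligibleS _ (fg k)) => w /= gf /esym. Qed.

Lemma strat_eq_trans (f g h : Omega -> R) :
  strat_eq p f g -> strat_eq p g h -> strat_eq p f h.
Proof.
move=> fg gh k; apply: (negligibleS _ (negligibleU (fg k) (gh k))) => w /= fh.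
by have [fgw|] := pselect (f w = g w); [right; rewrite -fgw | left].
Qed.

Lemma strat_eq_cst (k : 'I_n) (a b : R) :
  strat_eq p (fun=> a) (fun=> b) -> a = b.
Proof.
move=> /(_ k) ab; have [//|neq_ab] := pselect (a = b); exfalso.
have setT_null : (p k).-negligible [set: Omega].
  by apply: (negligibleS _ ab) => w _ /=.
have pT0 := measure_negligible measurableT setT_null.
by have := probability_setT (p k); rewrite pT0 => /eqP; rewrite eq_sym onee_eq0.
Qed.

End StrategyEquivalence.

Lemma is_strategy_cst (d : measure_display) (Omega : measurableType d)
  (R : realType) (A : set R) (P : set (set Omega)) (a : R) :
  A a -> is_strategy A P (fun=> a).
Proof.
move=> Aa; split => // B _; rewrite preimage_cst.
have [P0 PC _] := smallest_sigma_algebra setT P.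
by case: ifP => _ //; have := PC _ P0; rewrite setTD setC0.
Qed.

Section ResponsesUnderSavFix.
Context {d : measure_display} {Omega : measurableType d} {R : realType} {n : nat}.
Variables (p : 'I_n -> probability Omega R) (A : 'I_n -> set R).
Variables (I : 'I_n -> set (set Omega)) (P : set ('I_n -> Omega -> R)).
Variable Psi : 'I_n -> (Omega -> R) -> 'I_n -> (Omega -> R).

Hypothesis sav : forall i s sigma, is_strategy (A i) (I i) s -> P sigma ->
  strat_eq p (sigma i) s -> forall j, j != i -> strat_eq p (Psi i s j) (sigma j).
Hypothesis fix_conj : forall i s s', is_strategy (A i) (I i) s ->
  is_strategy (A i) (I i) s' ->
  forall j, j != i -> strat_eq p (Psi i s j) (Psi i s' j).

Lemma responses_independent i j sigma tau : P sigma -> P tau ->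
  is_strategy (A i) (I i) (sigma i) -> is_strategy (A i) (I i) (tau i) ->
  j != i -> strat_eq p (sigma j) (tau j).
Proof.
move=> Psigma Ptau sigma_i tau_i ji.
have conj_sigma := sav sigma_i Psigma (strat_eq_refl p _) ji.
have conj_tau := sav tau_i Ptau (strat_eq_refl p _) ji.
apply: strat_eq_trans (strat_eq_sym conj_sigma) _.
exact: strat_eq_trans (fix_conj sigma_i tau_i ji) conj_tau.
Qed.

End ResponsesUnderSavFix.

Theorem theorem3 (d : measure_display) (Omega : measurableType d)
  (R : realType) (n : nat) (n_ge2 : (2 <= n)%N)
  (p : 'I_n -> probability Omega R) (A : 'I_n -> set R)
  (I : 'I_n -> set (set Omega))
  (P : set ('I_n -> Omega -> R))
  (Psi : 'I_n -> (Omega -> R) -> 'I_n -> (Omega -> R)) :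
  equivalent_priors p ->
  (forall i, exists a b, [/\ A i a, A i b & a <> b]) ->
  (forall i, finite_meas_partition (I i)) ->
  (forall sigma, P sigma -> forall j, is_strategy (A j) (I j) (sigma j)) ->
  (forall i s, is_strategy (A i) (I i) s ->
     exists2 sigma, P sigma & strat_eq p (sigma i) s) ->
  (forall i sigma tau, P sigma -> P tau -> strat_eq p (sigma i) (tau i) ->
     forall j, strat_eq p (sigma j) (tau j)) ->
  (forall i s, is_strategy (A i) (I i) s ->
     forall j, j != i -> is_strategy (A j) (I j) (Psi i s j)) ->
  ~ ( (* SAV *)
      (forall i s sigma, is_strategy (A i) (I i) s -> P sigma ->
         strat_eq p (sigma i) s ->
         forall j, j != i -> strat_eq p (Psi i s j) (sigma j))
    /\ (* FIX *)
      (forall i s s', is_strategy (A i) (I i) s -> is_strategy (A i) (I i) s' ->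
         forall j, j != i -> strat_eq p (Psi i s j) (Psi i s' j)) ).
Proof.
move=> _ two_actions _ realized_strategy freedom _ _ [sav fix_conj].
pose i : 'I_n := Ordinal (leq_trans (isT : (0 < 2)%N) n_ge2).
pose j : 'I_n := Ordinal n_ge2.
have [a [b [Aa Ab neq_ab]]] := two_actions j.
have [sigma Psigma sigma_a] := freedom j _ (is_strategy_cst (I j) Aa).
have [tau Ptau tau_b] := freedom j _ (is_strategy_cst (I j) Ab).
have sigma_tau := responses_independent sav fix_conj Psigma Ptau
  (realized_strategy _ Psigma i) (realized_strategy _ Ptau i) (isT : j != i).
apply/neq_ab/(strat_eq_cst i).
apply: strat_eq_trans (strat_eq_sym sigma_a) _.
exact: strat_eq_trans sigma_tau tau_b.
Qed.
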